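(* Let $R$ be an irreducible reduced finite root system with root lattice $X=\mathbb{Z}R$ and $\check X=\operatorname{Hom}(X,\mathbb{Z})$. An automorphism $\sigma\in\operatorname{Aut}(R)$ preserves some base of $R$ if and only if no root $\alpha\in R$ vanishes identically on the fixed-point sublattice $\check X^\sigma=\{\check v\in\check X:\sigma\check v=\check v\}$.
   Context: $\operatorname{Aut}(R)$ denotes the group of linear automorphisms of $\mathbb{R}\otimes X$ preserving $R$, acting on $\check X$ by duality. *)

From HB Require Import structures.
From mathcomp Require Import all_boot all_order all_algebra.
Set Implicit Arguments. Unset Strict Implicit. Unset Printing Implicit Defensive.
Import Order.TTheory GRing.Theory Num.Theory.
Local Open Scope ring_scope.

Section RootSystems.
Variables (K : realFieldType) (n : nat).

Definition pair (v : 'rV[K]_n) (phi : 'cV[K]_n) : K := (v *m phi) 0 0.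

Definition is_intK (x : K) : Prop := exists z : int, x = z%:~R.

Definition mx_of (s : seq 'rV[K]_n) : 'M[K]_(size s, n) := \matrix_(i < size s) s`_i.

Definition refl (alpha : 'rV[K]_n) (phi : 'cV[K]_n) (v : 'rV[K]_n) : 'rV[K]_n :=
  v - pair v phi *: alpha.

Definition root_system (Rs : seq 'rV[K]_n) (cr : 'rV[K]_n -> 'cV[K]_n) : Prop :=
  [/\ uniq Rs, (0 : 'rV[K]_n) \notin Rs, row_full (mx_of Rs) &
   forall alpha, alpha \in Rs ->
     [/\ pair alpha (cr alpha) = 2,
         forall beta, beta \in Rs -> refl alpha (cr alpha) beta \in Rs
       & forall beta, beta \in Rs -> is_intK (pair beta (cr alpha))]].

Definition reduced_rs (Rs : seq 'rV[K]_n) : Prop :=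
  forall alpha (c : K), alpha \in Rs -> c *: alpha \in Rs -> c = 1 \/ c = -1.

Definition irreducible_rs (Rs : seq 'rV[K]_n) (cr : 'rV[K]_n -> 'cV[K]_n) : Prop :=
  Rs != [::] /\
  ~ (exists P : pred 'rV[K]_n,
       [/\ has P Rs, has (predC P) Rs &
        forall alpha beta, alpha \in Rs -> beta \in Rs -> P alpha -> ~~ P beta ->
          pair beta (cr alpha) = 0]).

Definition aut_rs (Rs : seq 'rV[K]_n) (S : 'M[K]_n) : Prop :=
  S \in unitmx /\ [seq a *m S | a <- Rs] =i Rs.

Definition is_base (Rs B : seq 'rV[K]_n) : Prop :=
  [/\ uniq B, {subset B <= Rs}, row_free (mx_of B), row_full (mx_of B) &
   forall alpha, alpha \in Rs ->
     exists c : 'I_(size B) -> int,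
       alpha = \sum_(i < size B) (c i)%:~R *: B`_i /\
       ((forall i, 0 <= c i) \/ (forall i, c i <= 0))].

(* coweight lattice Xcheck = Hom(ZR, Z), realised as the linear functionals on
   V = R (x) ZR taking integer values on R *)
Definition in_Xcheck (Rs : seq 'rV[K]_n) (phi : 'cV[K]_n) : Prop :=
  forall alpha, alpha \in Rs -> is_intK (pair alpha phi).

(* phi is fixed by the dual action of S  (phi o S^-1 = phi, i.e. S phi = phi) *)
Definition fixed_dual (S : 'M[K]_n) (phi : 'cV[K]_n) : Prop := S *m phi = phi.

End RootSystems.

(* An automorphism S of a reduced root system R stabilises a base of R iff no
   root vanishes on the S-fixed coweights (mainTheorem2).

   (=>) If S stabilises a base B, the height functional rho (equal to 1 on
   every simple root, section Height) is an integral coweight fixed by S, and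
   it is nonzero on every root, the roots being sign-coherent integral
   combinations of B.
   (<=) If every root is nonzero on some S-fixed coweight, a combination of
   finitely many of them is nonzero on all roots (avoid_zeros,
   fixed_regular_on).  For such a regular integral coweight psi the psi-positive
   roots that are not sums of two positive roots form a base (RegularBase): by
   induction on the height every positive root is a sum of them, and they are
   linearly independent (obtuse_free) because distinct ones make an obtuse
   angle (simple_obtuse) for a reflection-invariant inner product
   (InvariantForm, RootSystem).  As S permutes the roots and fixes psi, it
   permutes this base. *)
From HB Require Import structures.
From mathcomp Require Import all_boot all_order all_algebra all_fingroup.
From mathcomp Require Import zify ring lra.
From Stdlib Require Import Classical.
Set Implicit Arguments. Unset Strict Implicit. Unset Printing Implicit Defensive.
Import Order.TTheory GRing.Theory Num.Theory.
Local Open Scope ring_scope.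

Section Pairing.
Variables (K : realFieldType) (n : nat).
Implicit Types (v w : 'rV[K]_n) (phi psi : 'cV[K]_n).

Lemma pairD v w phi : pair (v + w) phi = pair v phi + pair w phi.
Proof. by rewrite /pair mulmxDl mxE. Qed.
Lemma pairZ (a : K) v phi : pair (a *: v) phi = a * pair v phi.
Proof. by rewrite /pair -scalemxAl mxE. Qed.
Lemma pairN v phi : pair (- v) phi = - pair v phi.
Proof. by rewrite /pair mulNmx mxE. Qed.
Lemma pair0 phi : pair 0 phi = 0.
Proof. by rewrite /pair mul0mx mxE. Qed.
Lemma pairDr v phi psi : pair v (phi + psi) = pair v phi + pair v psi.
Proof. by rewrite /pair mulmxDr mxE. Qed.
Lemma pairZr (a : K) v phi : pair v (a *: phi) = a * pair v phi.
Proof. by rewrite /pair -scalemxAr mxE. Qed.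
Lemma pair_sum I (r : seq I) (P : pred I) (F : I -> 'rV[K]_n) phi :
  pair (\sum_(i <- r | P i) F i) phi = \sum_(i <- r | P i) pair (F i) phi.
Proof.
elim/big_rec2: _ => [|i x y _ <-]; first exact: pair0.
by rewrite pairD.
Qed.

Lemma row_mx_of (s : seq 'rV[K]_n) (i : 'I_(size s)) : row i (mx_of s) = s`_i.
Proof. by apply/rowP => j; rewrite /mx_of !mxE. Qed.

Lemma mx_of_mul (s : seq 'rV[K]_n) phi (i : 'I_(size s)) :
  (mx_of s *m phi) i 0 = pair s`_i phi.
Proof. by rewrite -row_mx_of /pair -row_mul [RHS]mxE. Qed.

Lemma mx_of_comb (s : seq 'rV[K]_n) (c : 'I_(size s) -> K) :
  \sum_(i < size s) c i *: s`_i = (\row_i c i) *m mx_of s.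
Proof. by rewrite mulmx_sum_row; apply: eq_bigr => i _; rewrite row_mx_of mxE. Qed.

Lemma is_intKD (x y : K) : is_intK x -> is_intK y -> is_intK (x + y).
Proof. by move=> [a ->] [b ->]; exists (a + b); rewrite rmorphD. Qed.
Lemma is_intKM (x y : K) : is_intK x -> is_intK y -> is_intK (x * y).
Proof. by move=> [a ->] [b ->]; exists (a * b); rewrite rmorphM. Qed.

Lemma row_free_solve m (A : 'M[K]_(m, n)) (c : 'cV[K]_m) :
  row_free A -> exists phi : 'cV[K]_n, A *m phi = c.
Proof.
move=> frA; have trfull : row_full A^T by rewrite /row_full mxrank_tr.
exists (c^T *m pinvmx A^T)^T.
by rewrite -[A]trmxK -trmx_mul trmxK mulmxKpV ?trmxK // submx_full.
Qed.

End Pairing.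

Section Height.
Variables (K : realFieldType) (n : nat) (Rs B : seq 'rV[K]_n).
Hypothesis hB : is_base Rs B.

Lemma height_exists : exists phi : 'cV[K]_n, forall i : 'I_(size B), pair B`_i phi = 1.
Proof.
case: hB => _ _ frB _ _; have [phi Mphi] := row_free_solve (const_mx 1) frB.
by exists phi => i; rewrite -mx_of_mul Mphi mxE.
Qed.

Variable rho : 'cV[K]_n.
Hypothesis rho1 : forall i : 'I_(size B), pair B`_i rho = 1.

Lemma height_expand (c : 'I_(size B) -> int) :
  pair (\sum_(i < size B) (c i)%:~R *: B`_i) rho = (\sum_i c i)%:~R.
Proof.
by rewrite pair_sum rmorph_sum; apply: eq_bigr => i _; rewrite pairZ rho1 mulr1.
Qed.

Lemma height_int : in_Xcheck Rs rho.
Proof.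
case: hB => _ _ _ _ hc a /hc [c [-> _]].
by exists (\sum_i c i); rewrite height_expand.
Qed.

(* A sign-coherent integral combination of height 0 is trivial. *)
Lemma height_nonzero a : a \in Rs -> a != 0 -> pair a rho != 0.
Proof.
case: hB => _ _ _ _ hc /hc [c [ea hs]] a0; rewrite ea height_expand intr_eq0.
apply: contra a0 => /eqP s0; rewrite ea big1 // => i _.
suff -> : c i = 0 by rewrite scale0r.
case: hs => hs; first exact: (psumr_eq0P (fun j _ => hs j) s0).
apply/eqP; rewrite -oppr_eq0; apply/eqP.
apply: (psumr_eq0P (P := predT) (F := fun j => - c j)) => //.
  by move=> j _; rewrite oppr_ge0.
by rewrite sumrN s0 oppr0.
Qed.

Lemma height_fixed (S : 'M[K]_n) : [seq b *m S | b <- B] =i B -> fixed_dual S rho.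
Proof.
case: hB => _ _ _ fuB _ hSB; apply: (row_full_inj fuB); apply/colP => i.
rewrite mulmxA mx_of_mul rho1.
have -> : (mx_of B *m S *m rho) i 0 = pair (B`_i *m S) rho.
  by rewrite -row_mx_of /pair -!row_mul [RHS]mxE.
have : B`_i *m S \in B by rewrite -hSB; apply: map_f; rewrite mem_nth.
by move=> /(nthP 0) [j jB <-]; exact: (rho1 (Ordinal jB)).
Qed.

End Height.

(* An inner product on V invariant under every involution of V permuting a
   spanning sequence Rs: the standard dot product averaged over the finite set
   of permutations p of Rs induced by a linear map (lin_of p). *)
Section InvariantForm.
Variables (K : realFieldType) (n : nat) (Rs : seq 'rV[K]_n).
Hypothesis hfull : row_full (mx_of Rs).
Local Notation m := (size Rs).
Local Notation M := (mx_of Rs).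

(* The only candidate for a linear map inducing p, and the test that it does. *)
Definition lin_of (p : 'S_m) : 'M[K]_n := pinvmx M *m row_perm p M.
Definition linear_perm (p : 'S_m) : bool := M *m lin_of p == row_perm p M.

Definition dot (u w : 'rV[K]_n) : K := \sum_j u 0 j * w 0 j.
Definition invform (x y : 'rV[K]_n) : K :=
  \sum_(p | linear_perm p) dot (x *m lin_of p) (y *m lin_of p).

Lemma pinvmxM : pinvmx M *m M = 1%:M.
Proof. by rewrite -[pinvmx M]mul1mx mulmxKpV // submx_full. Qed.

Lemma invformC x y : invform x y = invform y x.
Proof. by apply: eq_bigr => p _; apply: eq_bigr => j _; rewrite mulrC. Qed.

Lemma invformDl x y z : invform (x + y) z = invform x z + invform y z.
Proof.
rewrite -big_split; apply: eq_bigr => p _; rewrite -big_split.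
by apply: eq_bigr => j _; rewrite mulmxDl mxE mulrDl.
Qed.

Lemma invformZl a x z : invform (a *: x) z = a * invform x z.
Proof.
rewrite mulr_sumr; apply: eq_bigr => p _; rewrite mulr_sumr.
by apply: eq_bigr => j _; rewrite -scalemxAl mxE mulrA.
Qed.

Lemma invform0l z : invform 0 z = 0.
Proof. by rewrite -(scale0r 0) invformZl mul0r. Qed.
Lemma invformBl x y z : invform (x - y) z = invform x z - invform y z.
Proof. by rewrite invformDl -scaleN1r invformZl mulN1r. Qed.
Lemma invformBr x y z : invform z (x - y) = invform z x - invform z y.
Proof. by rewrite invformC invformBl !(invformC z). Qed.
Lemma invformZr a x z : invform z (a *: x) = a * invform z x.
Proof. by rewrite invformC invformZl invformC. Qed.
Lemma invformNr x z : invform z (- x) = - invform z x.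
Proof. by rewrite -scaleN1r invformZr mulN1r. Qed.

Lemma invform_suml I (r : seq I) (P : pred I) (a : I -> K) (u : I -> 'rV[K]_n) y :
  invform (\sum_(i <- r | P i) a i *: u i) y = \sum_(i <- r | P i) a i * invform (u i) y.
Proof.
elim/big_rec2: _ => [|i s w _ <-]; first exact: invform0l.
by rewrite invformDl invformZl.
Qed.
Lemma invform_sumr I (r : seq I) (P : pred I) (a : I -> K) (u : I -> 'rV[K]_n) y :
  invform y (\sum_(i <- r | P i) a i *: u i) = \sum_(i <- r | P i) a i * invform y (u i).
Proof.
by rewrite invformC invform_suml; apply: eq_bigr => i _; rewrite invformC.
Qed.

Lemma lin_ofE g p : M *m g = row_perm p M -> lin_of p = g.
Proof. by move=> e; rewrite /lin_of -e (mulmxA (pinvmx M)) pinvmxM mul1mx. Qed.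

Lemma linear_permP g p : M *m g = row_perm p M -> linear_perm p.
Proof. by move=> e; rewrite /linear_perm (lin_ofE e) e. Qed.

Lemma linear_perm1 : linear_perm 1%g /\ lin_of 1%g = 1%:M.
Proof. by rewrite /linear_perm /lin_of row_perm1 pinvmxM mulmx1 eqxx. Qed.

Lemma dot_gt0 u : u != 0 -> 0 < dot u u.
Proof.
move=> u0; have sq_ge0 j : 0 <= u 0 j * u 0 j by rewrite -expr2 sqr_ge0.
rewrite lt_def sumr_ge0 // andbT; apply: contra u0.
rewrite psumr_eq0 // => /allP h; apply/eqP/rowP => j; rewrite mxE.
by have /implyP/(_ isT) := h j (mem_index_enum _); rewrite mulf_eq0 orbb => /eqP.
Qed.

(* Positive definiteness: the identity term is already positive. *)
Lemma invform_gt0 x : x != 0 -> 0 < invform x x.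
Proof.
move=> x0; have [v1 l1] := linear_perm1.
rewrite /invform (bigD1 1%g) //= l1 mulmx1 ltr_wpDr ?dot_gt0 //.
by apply: sumr_ge0 => p _; apply: sumr_ge0 => j _; rewrite -expr2 sqr_ge0.
Qed.

Lemma row_perm_mulmx q (A : 'M[K]_(m, n)) (B : 'M[K]_n) :
  row_perm q (A *m B) = row_perm q A *m B.
Proof. by rewrite !row_permE mulmxA. Qed.

Lemma row_perm_inj q : injective (@row_perm K m n q).
Proof.
move=> A B h.
by rewrite -[A]row_perm1 -(mulVg q) row_permM h -row_permM mulVg row_perm1.
Qed.

(* Invariance under an involution h inducing the permutation q of Rs:
   composing with h shifts the linear permutations by q. *)
Section Invariance.
Variables (h : 'M[K]_n) (q : 'S_m).
Hypothesis hh : h *m h = 1%:M.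
Hypothesis Mh : M *m h = row_perm q M.

Lemma linear_perm_shiftE p :
  linear_perm p -> M *m (h *m lin_of p) = row_perm (q * p)%g M.
Proof. by move=> /eqP vp; rewrite mulmxA Mh -row_perm_mulmx vp row_permM. Qed.

Lemma linear_perm_shift p : linear_perm (q * p)%g = linear_perm p.
Proof.
apply/idP/idP => [/eqP vp|/linear_perm_shiftE]; last exact: linear_permP.
apply: (@linear_permP (h *m lin_of (q * p)%g)); apply: (@row_perm_inj q).
by rewrite row_perm_mulmx -Mh -mulmxA (mulmxA h h) hh mul1mx vp row_permM.
Qed.

Lemma invform_inv x y : invform (x *m h) (y *m h) = invform x y.
Proof.
rewrite /invform [RHS](reindex_inj (mulgI q)) /= !big_mkcond /=.
rewrite [RHS]big_mkcond; apply: eq_bigr => p _; rewrite linear_perm_shift.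
case vp : (linear_perm p) => //.
by rewrite (lin_ofE (linear_perm_shiftE vp)) !mulmxA.
Qed.
End Invariance.
End InvariantForm.

Lemma sub_double (R : pzRingType) (V : lmodType R) (v : V) : v - 2 *: v = - v.
Proof. by rewrite scaler_nat mulr2n opprD addNKr. Qed.

Section RootSystem.
Variables (K : realFieldType) (n : nat) (Rs : seq 'rV[K]_n) (cr : 'rV[K]_n -> 'cV[K]_n).
Hypothesis hR : root_system Rs cr.
Local Notation m := (size Rs).
Local Notation M := (mx_of Rs).
Local Notation Q := (invform Rs).

Lemma rs_uniq : uniq Rs. Proof. by case: hR. Qed.
Lemma rs_nz : (0 : 'rV[K]_n) \notin Rs. Proof. by case: hR. Qed.
Lemma rs_full : row_full M. Proof. by case: hR. Qed.
Lemma rs_two a : a \in Rs -> pair a (cr a) = 2.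
Proof. by case: hR => _ _ _ /(_ a) h /h []. Qed.
Lemma rs_refl a b : a \in Rs -> b \in Rs -> refl a (cr a) b \in Rs.
Proof. by case: hR => _ _ _ /(_ a) h /h [_ H _] /H. Qed.
Lemma rs_int a b : a \in Rs -> b \in Rs -> is_intK (pair b (cr a)).
Proof. by case: hR => _ _ _ /(_ a) h /h [_ _ H] /H. Qed.

Lemma rs_neg a : a \in Rs -> - a \in Rs.
Proof. by move=> aR; have := rs_refl aR aR; rewrite /refl rs_two // sub_double. Qed.

Lemma invform_root_gt0 a : a \in Rs -> 0 < Q a a.
Proof. by move=> aR; apply: (invform_gt0 rs_full); apply: contraNneq rs_nz => <-. Qed.

Definition refl_mx (a : 'rV[K]_n) : 'M[K]_n := 1%:M - cr a *m a.

Lemma refl_mxE a v : v *m refl_mx a = refl a (cr a) v.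
Proof.
by rewrite /refl_mx /refl mulmxBr mulmx1 mulmxA [v *m cr a]mx11_scalar mul_scalar_mx.
Qed.

Lemma refl_mx_invol a : a \in Rs -> refl_mx a *m refl_mx a = 1%:M.
Proof.
move=> aR; have aca : a *m cr a = 2%:M.
  by rewrite [a *m cr a]mx11_scalar -[(a *m _) 0 0]/(pair a (cr a)) rs_two.
rewrite /refl_mx mulmxBl mul1mx mulmxBr mulmx1 -mulmxA (mulmxA a) aca.
by rewrite mul_scalar_mx -scalemxAr sub_double opprK subrK.
Qed.

Lemma refl_mx_perm a : a \in Rs -> exists q : 'S_m, M *m refl_mx a = row_perm q M.
Proof.
move=> aR.
have inR (i : 'I_m) : Rs`_i *m refl_mx a \in Rs by rewrite refl_mxE rs_refl // mem_nth.
pose f (i : 'I_m) : 'I_m := insubd i (index (Rs`_i *m refl_mx a) Rs).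
have fE i : Rs`_(f i) = Rs`_i *m refl_mx a.
  by rewrite val_insubd index_mem inR nth_index.
have finj : injective f.
  move=> i j /(congr1 (fun k : 'I_m => Rs`_k *m refl_mx a)); rewrite !fE.
  rewrite -!mulmxA refl_mx_invol // !mulmx1 => /eqP.
  by rewrite nth_uniq ?rs_uniq // => /eqP/val_inj.
exists (perm finj); apply/row_matrixP => i.
by rewrite row_mul row_mx_of row_permEsub row_rowsub row_mx_of permE fE.
Qed.

Lemma coroot_invform a x : a \in Rs -> pair x (cr a) * Q a a = 2 * Q x a.
Proof.
move=> aR; have [q Mq] := refl_mx_perm aR.
have := invform_inv rs_full (refl_mx_invol aR) Mq x a.
rewrite !refl_mxE /refl rs_two // sub_double invformNr invformBl invformZl => h.
set A := Q x a in h *; set B := Q a a in h *; nra.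
Qed.

Hypothesis hred : reduced_rs Rs.

Lemma roots_strict_cs a b : a \in Rs -> b \in Rs -> a != b -> a != - b ->
  Q a b ^+ 2 < Q a a * Q b b.
Proof.
move=> aR bR ab anb; have qb := invform_root_gt0 bR.
set v := Q b b *: a - Q a b *: b.
have v0 : v != 0.
  apply/negP => /eqP /eqP; rewrite subr_eq0 => /eqP e.
  have e2 : (Q a b / Q b b) *: b = a.
    by rewrite mulrC -scalerA -e scalerA mulVf ?scale1r // gt_eqF.
  have := @hred b (Q a b / Q b b) bR; rewrite e2 => /(_ aR) [t1|t1].
    by move: ab; rewrite -e2 t1 scale1r eqxx.
  by move: anb; rewrite -e2 t1 scaleN1r eqxx.
have := invform_gt0 rs_full v0.
rewrite /v invformBl !invformBr !invformZl !invformZr (invformC Rs b a).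
set A := Q a a; set B := Q b b in qb *; set C := Q a b => h.
nra.
Qed.

(* Two roots at an acute angle have Cartan integers of product < 4, so one of
   them is 1, and the corresponding reflection exhibits a - b or b - a. *)
Lemma acute_roots_cartan1 a b : a \in Rs -> b \in Rs -> a != b -> 0 < Q a b ->
  pair a (cr b) = 1 \/ pair b (cr a) = 1.
Proof.
move=> aR bR ab qab.
have anb : a != - b.
  apply: contraTneq qab => ->; rewrite invformC -scaleN1r invformZr mulN1r.
  by rewrite oppr_gt0 -leNgt ltW // invform_root_gt0.
have cs := roots_strict_cs aR bR ab anb.
have qa := invform_root_gt0 aR; have qb := invform_root_gt0 bR.
have e1 := coroot_invform b aR; have e2 := coroot_invform a bR.
rewrite (invformC Rs b a) in e1.
have [x ex] := rs_int aR bR; have [y ey] := rs_int bR aR.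
rewrite ex in e1; rewrite ey in e2; rewrite ex ey.
have x0 : (0 : K) < x%:~R by nra.
have y0 : (0 : K) < y%:~R by nra.
have xy : (x * y)%:~R < (4 : K) by rewrite rmorphM; nra.
have {}xy : x * y < 4 by rewrite -(ltr_int K).
rewrite ltr0z in x0; rewrite ltr0z in y0.
have [->|->] : y = 1 \/ x = 1 by lia.
  by left. by right.
Qed.

Lemma acute_roots_diff a b : a \in Rs -> b \in Rs -> a != b -> 0 < Q a b ->
  a - b \in Rs.
Proof.
move=> aR bR ab /(acute_roots_cartan1 aR bR ab) [e|e].
  by have := rs_refl bR aR; rewrite /refl e scale1r.
by rewrite -opprB rs_neg //; have := rs_refl aR bR; rewrite /refl e scale1r.
Qed.

End RootSystem.

Lemma positive_comb_eq0 (K : realFieldType) (n : nat) (B : seq 'rV[K]_n)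
    (phi : 'cV[K]_n) (f : 'I_(size B) -> K) :
  (forall i : 'I_(size B), 0 < pair B`_i phi) -> (forall i, 0 <= f i) ->
  \sum_i f i *: B`_i = 0 -> forall i, f i = 0.
Proof.
move=> Bpos f0 /(congr1 (fun u => pair u phi)); rewrite pair0 pair_sum => s0 i.
have fB0 k : true -> 0 <= pair (f k *: B`_k) phi.
  by move=> _; rewrite pairZ mulr_ge0 ?f0 ?ltW ?Bpos.
have /eqP := psumr_eq0P fB0 s0 (i := i) isT.
by rewrite pairZ mulf_eq0 (gt_eqF (Bpos i)) orbF => /eqP.
Qed.

(* A sequence of vectors on one side of a hyperplane, pairwise at obtuse
   angles for a positive definite form, is linearly independent: in a
   vanishing combination, the positive and negative parts w have
   (w, w) <= 0. *)
Lemma obtuse_free (K : realFieldType) (n : nat) (Rs B : seq 'rV[K]_n)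
    (phi : 'cV[K]_n) :
  row_full (mx_of Rs) -> (forall i : 'I_(size B), 0 < pair B`_i phi) ->
  (forall i j : 'I_(size B), i != j -> invform Rs B`_i B`_j <= 0) ->
  row_free (mx_of B).
Proof.
move=> hfull Bpos obtuse; apply: inj_row_free => v hv.
have {}hv : \sum_i v 0 i *: B`_i = 0.
  by rewrite mx_of_comb -hv; congr (_ *m _); apply/rowP => i; rewrite mxE.
pose P i := if 0 <= v 0 i then v 0 i else 0.
pose N i := if 0 <= v 0 i then 0 else - v 0 i.
have P0 i : 0 <= P i by rewrite /P; case: ifP.
have N0 i : 0 <= N i by rewrite /N; case: ifPn => //; rewrite -ltNge oppr_ge0 => /ltW.
have vPN i : v 0 i = P i - N i by rewrite /P /N; case: ifP; rewrite ?subr0 ?sub0r ?opprK.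
have PN0 i : P i * N i = 0 by rewrite /P /N; case: ifP; rewrite ?mulr0 ?mul0r.
set w := \sum_i P i *: B`_i; set w' := \sum_i N i *: B`_i.
have ww : w = w'.
  apply/eqP; rewrite -subr_eq0 -sumrB; apply/eqP; rewrite -[RHS]hv.
  by apply: eq_bigr => i _; rewrite -scalerBl -vPN.
have Qw : invform Rs w w <= 0.
  rewrite {2}ww /w invform_suml; apply: sumr_le0 => i _.
  rewrite /w' invform_sumr mulr_sumr; apply: sumr_le0 => j _.
  have [<-|ij] := eqVneq i j; first by rewrite mulrA PN0 mul0r.
  by rewrite mulrA mulr_ge0_le0 ?mulr_ge0 ?obtuse.
have w0 : w = 0.
  apply: contraTeq Qw => w0; rewrite -ltNge; exact: invform_gt0.
have Pz := positive_comb_eq0 Bpos P0 w0.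
have Nz := positive_comb_eq0 Bpos N0 (etrans (esym ww) w0).
by apply/rowP => i; rewrite vPN Pz Nz subr0 mxE.
Qed.

Section RegularBase.
Variables (K : realFieldType) (n : nat) (Rs : seq 'rV[K]_n) (cr : 'rV[K]_n -> 'cV[K]_n).
Hypothesis hR : root_system Rs cr.
Hypothesis hred : reduced_rs Rs.
Variable phi : 'cV[K]_n.
Hypothesis phi_int : in_Xcheck Rs phi.
Hypothesis phi_reg : forall a, a \in Rs -> pair a phi != 0.

Definition pos (a : 'rV[K]_n) : bool := 0 < pair a phi.
Definition decomposable (a : 'rV[K]_n) : bool :=
  has (fun b => [&& pos b, a - b \in Rs & pos (a - b)]) Rs.
Definition simple (a : 'rV[K]_n) : bool := [&& a \in Rs, pos a & ~~ decomposable a].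
Definition simple_roots : seq 'rV[K]_n := filter simple Rs.
Local Notation Bs := simple_roots.

Lemma simple_in a : simple a -> a \in Rs. Proof. by case/and3P. Qed.
Lemma simple_pos a : simple a -> pos a. Proof. by case/and3P. Qed.

Lemma simple_roots_nth (i : 'I_(size Bs)) : simple Bs`_i.
Proof. by have := mem_nth 0 (ltn_ord i); rewrite mem_filter => /andP []. Qed.

Lemma pos_height a : a \in Rs -> pos a -> exists k : nat, pair a phi = k%:R.
Proof.
move=> aR; rewrite /pos; have [z ->] := phi_int aR; rewrite ltr0z.
by case: z => // k _; exists k.
Qed.

Lemma neg_root_pos a : a \in Rs -> ~~ pos a -> pos (- a).
Proof.
by move=> aR; rewrite /pos pairN oppr_gt0 -leNgt le_eqVlt (negbTE (phi_reg aR)).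
Qed.

Definition simple_cone (a : 'rV[K]_n) : Prop := exists c : 'I_(size Bs) -> int,
  (forall i, 0 <= c i) /\ a = \sum_(i < size Bs) (c i)%:~R *: Bs`_i.

Lemma simple_cone_simple a : simple a -> simple_cone a.
Proof.
move=> sa; have aB : a \in Bs by rewrite mem_filter sa simple_in.
have jB : (index a Bs < size Bs)%N by rewrite index_mem.
pose j := Ordinal jB.
exists (fun i => (i == j)%:R); split => [i|]; first exact: ler0n.
rewrite (bigD1 j) //= eqxx scale1r nth_index // big1 ?addr0 // => i /negPf ->.
by rewrite scale0r.
Qed.

Lemma simple_coneD a b : simple_cone a -> simple_cone b -> simple_cone (a + b).
Proof.
move=> [c [c0 ->]] [d [d0 ->]]; exists (fun i => c i + d i); split.
  by move=> i; rewrite addr_ge0.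
by rewrite -big_split; apply: eq_bigr => i _; rewrite rmorphD scalerDl.
Qed.

Lemma pos_simple_cone a : a \in Rs -> pos a -> simple_cone a.
Proof.
move=> aR pa; have [k ek] := pos_height aR pa.
elim/ltn_ind: k a aR pa ek => k IH a aR pa ek.
case sa : (simple a); first exact: simple_cone_simple.
move: sa; rewrite /simple aR pa /= => /negbFE /hasP [b bR /and3P [pb abR pab]].
have [kb ekb] := pos_height bR pb; have [kc ekc] := pos_height abR pab.
have ek2 : k = (kb + kc)%N.
  by apply/eqP; rewrite -(eqr_nat K) natrD -ek -ekb -ekc -pairD addrC subrK.
have kb0 : (0 < kb)%N by rewrite -(ltr_nat K) -ekb.
have kc0 : (0 < kc)%N by rewrite -(ltr_nat K) -ekc.
rewrite -[a](subrK b) addrC; apply: simple_coneD.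
  by apply: (IH kb) => //; lia.
by apply: (IH kc) => //; lia.
Qed.

(* Distinct simple roots form an obtuse angle: otherwise their difference is a
   root, and according to its sign one of them is decomposable. *)
Lemma simple_obtuse a b : simple a -> simple b -> a != b -> invform Rs a b <= 0.
Proof.
move=> sa sb ab; rewrite leNgt; apply/negP => /(acute_roots_diff hR hred).
move=> /(_ (simple_in sa) (simple_in sb) ab) abR.
case pab : (pos (a - b)).
  move: sa => /and3P [_ _ /hasP []]; exists b; first exact: simple_in.
  by rewrite (simple_pos sb) abR pab.
have pba : pos (b - a) by rewrite -opprB neg_root_pos // pab.
move: sb => /and3P [_ _ /hasP []]; exists a; first exact: simple_in.
by rewrite (simple_pos sa) pba -opprB (rs_neg hR).
Qed.

Lemma simple_roots_free : row_free (mx_of Bs).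
Proof.
apply: (obtuse_free (rs_full hR)) => [i|i j ij]; first exact/simple_pos/simple_roots_nth.
apply: simple_obtuse; try exact: simple_roots_nth.
apply: contra ij => /eqP e; apply/eqP/val_inj/eqP.
by rewrite -(nth_uniq 0 (ltn_ord i) (ltn_ord j) (filter_uniq _ (rs_uniq hR))) e.
Qed.

Lemma simple_roots_expand a : a \in Rs -> exists c : 'I_(size Bs) -> int,
  a = \sum_(i < size Bs) (c i)%:~R *: Bs`_i /\
  ((forall i, 0 <= c i) \/ (forall i, c i <= 0)).
Proof.
move=> aR; case pa : (pos a).
  by have [c [c0 e]] := pos_simple_cone aR pa; exists c; split => //; left.
have [c [c0 e]] := pos_simple_cone (rs_neg hR aR) (neg_root_pos aR (negbT pa)).
exists (fun i => - c i); split; last by right => i; rewrite oppr_le0.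
rewrite -[a]opprK e -sumrN; apply: eq_bigr => i _.
by rewrite rmorphN scaleNr.
Qed.

Lemma simple_roots_full : row_full (mx_of Bs).
Proof.
have sub : (mx_of Rs <= mx_of Bs)%MS.
  apply/row_subP => i; rewrite row_mx_of.
  have [c [-> _]] := simple_roots_expand (mem_nth 0 (ltn_ord i)).
  by rewrite mx_of_comb submxMl.
rewrite /row_full eqn_leq rank_leq_col /=.
by have := mxrankS sub; move: (rs_full hR); rewrite /row_full => /eqP ->.
Qed.

Lemma simple_roots_base : is_base Rs Bs.
Proof.
split; first exact: filter_uniq (rs_uniq hR).
- by move=> b; rewrite mem_filter => /andP [].
- exact: simple_roots_free.
- exact: simple_roots_full.
- exact: simple_roots_expand.
Qed.

Section Stability.
Variable S : 'M[K]_n.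
Hypothesis hS : aut_rs Rs S.
Hypothesis hfix : fixed_dual S phi.

Lemma posS v : pos (v *m S) = pos v.
Proof. by rewrite /pos /pair -mulmxA hfix. Qed.

Lemma aut_inj : injective (fun v : 'rV[K]_n => v *m S).
Proof. by apply: row_free_inj; rewrite row_free_unit hS.1. Qed.

Lemma aut_mem a : (a *m S \in Rs) = (a \in Rs).
Proof.
rewrite -hS.2; apply/mapP/idP => [[b bR /aut_inj -> //]|aR].
by exists a.
Qed.

Lemma decomposableS a : decomposable (a *m S) = decomposable a.
Proof.
apply/hasP/hasP => [[b bR /and3P [pb abR pab]]|[b bR /and3P [pb abR pab]]].
  have : b \in [seq x *m S | x <- Rs] by rewrite hS.2.
  move=> /mapP [b' b'R eb]; exists b' => //.
  by rewrite -posS -eb pb -aut_mem -posS mulmxBl -eb abR pab.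
exists (b *m S); first by rewrite aut_mem.
by rewrite posS pb -mulmxBl aut_mem posS abR pab.
Qed.

Lemma simpleS a : simple (a *m S) = simple a.
Proof. by rewrite /simple aut_mem posS decomposableS. Qed.

Lemma simple_roots_stable : [seq b *m S | b <- Bs] =i Bs.
Proof.
move=> x; apply/mapP/idP => [[b] | ].
  by rewrite !mem_filter => /andP [sb _] ->; rewrite simpleS sb aut_mem simple_in.
rewrite mem_filter => /andP [sx xR].
have : x \in [seq y *m S | y <- Rs] by rewrite hS.2.
move=> /mapP [x' x'R ex]; exists x' => //.
by rewrite mem_filter x'R andbT -simpleS -ex.
Qed.
End Stability.

End RegularBase.

(* For finitely many pairs (f x, g x), never both zero, some natural number k
   makes every f x + k g x nonzero: the product of the linear polynomials
   f x + g x 'X is nonzero, so it cannot vanish at all of 0, ..., its size. *)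
Lemma avoid_zeros (K : realFieldType) (T : eqType) (l : seq T) (f g : T -> K) :
  (forall x, x \in l -> f x != 0 \/ g x != 0) ->
  exists k : nat, forall x, x \in l -> f x + k%:R * g x != 0.
Proof.
move=> fg; pose p := \prod_(x <- l) ((f x)%:P + g x *: 'X).
have p0 : p != 0.
  rewrite prodf_seq_neq0; apply/allP => x xl /=; apply/negP => /eqP e.
  have := congr1 (fun q : {poly K} => (q`_0, q`_1)) e.
  rewrite !coefD !coefC !coefZ !coefX /= mulr0 addr0 mulr1 add0r => -[f0 g0].
  by case: (fg x xl); rewrite ?f0 ?g0 eqxx.
have [k pk] : exists k : 'I_(size p), p.[(k : nat)%:R] != 0.
  apply/existsP; apply: contraR p0 => /existsPn pk; apply/eqP.
  apply: (@roots_geq_poly_eq0 _ _ [seq (k : nat)%:R | k <- iota 0 (size p)]).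
  - apply/allP => x /mapP [k]; rewrite mem_iota add0n => kl ->.
    by have := pk (Ordinal kl); rewrite negbK.
  - by rewrite map_inj_uniq ?iota_uniq // => x y /eqP; rewrite eqr_nat => /eqP.
  - by rewrite size_map size_iota.
exists k => x xl; move: pk; rewrite horner_prod prodf_seq_neq0 => /allP /(_ x xl) /=.
by rewrite hornerD hornerC hornerZ hornerX mulrC.
Qed.

(* If every root is nonzero on some S-fixed coweight, then a single S-fixed
   coweight is nonzero on all roots: combine them one root at a time. *)
Section FixedRegular.
Variables (K : realFieldType) (n : nat) (Rs : seq 'rV[K]_n) (S : 'M[K]_n).

Definition fixed_coweight (phi : 'cV[K]_n) : Prop := in_Xcheck Rs phi /\ fixed_dual S phi.

Lemma fixed_coweight0 : fixed_coweight 0.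
Proof. by split; [move=> a _; exists 0; rewrite /pair mulmx0 mxE | rewrite /fixed_dual mulmx0]. Qed.

Lemma fixed_coweight_comb (k : nat) psi phi :
  fixed_coweight psi -> fixed_coweight phi -> fixed_coweight (psi + k%:R *: phi).
Proof.
move=> [i1 f1] [i2 f2]; split; last by rewrite /fixed_dual mulmxDr -scalemxAr f1 f2.
move=> a aR; rewrite pairDr pairZr.
by apply: is_intKD (i1 a aR) (is_intKM _ (i2 a aR)); exists k.
Qed.

Hypothesis separating : forall a, a \in Rs ->
  exists2 phi, fixed_coweight phi & pair a phi != 0.

Lemma fixed_regular_on (l : seq 'rV[K]_n) : {subset l <= Rs} ->
  exists2 psi, fixed_coweight psi & forall b, b \in l -> pair b psi != 0.
Proof.
elim: l => [|a l IH] sub; first by exists 0 => //; exact: fixed_coweight0.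
have [psi cpsi psi_nz] := IH (fun x xl => sub x (@mem_behead _ (a :: l) x xl)).
have [phi cphi phi_nz] := separating (sub a (mem_head _ _)).
have [|k hk] := @avoid_zeros K _ (a :: l) (fun b => pair b psi) (fun b => pair b phi).
  by move=> b; rewrite inE => /predU1P [->|/psi_nz]; [right | left].
exists (psi + k%:R *: phi); first exact: fixed_coweight_comb.
by move=> b bl; rewrite pairDr pairZr hk.
Qed.

End FixedRegular.

Theorem mainTheorem2 (K : realFieldType) (n : nat) (Rs : seq 'rV[K]_n)
    (cr : 'rV[K]_n -> 'cV[K]_n) (S : 'M[K]_n)
    (hR : root_system Rs cr) (hred : reduced_rs Rs) (hirr : irreducible_rs Rs cr)
    (hS : aut_rs Rs S) :
  (exists B : seq 'rV[K]_n, is_base Rs B /\ [seq b *m S | b <- B] =i B) <->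
  (forall alpha, alpha \in Rs ->
     ~ (forall phi : 'cV[K]_n, in_Xcheck Rs phi -> fixed_dual S phi ->
          pair alpha phi = 0)).
Proof.
split.
  move=> [B [hB hSB]] a aR vanish; have [rho rho1] := height_exists hB.
  have a0 : a != 0 by apply: contraNneq (rs_nz hR) => <-.
  have := height_nonzero hB rho1 aR a0.
  by rewrite (vanish rho (height_int hB rho1) (height_fixed hB rho1 hSB)) eqxx.
move=> nonvanishing.
have separating a : a \in Rs -> exists2 phi, fixed_coweight Rs S phi & pair a phi != 0.
  move=> aR; have [phi not_zero] := not_all_ex_not _ _ (nonvanishing a aR).
  have [i1 {}not_zero] := imply_to_and _ _ not_zero.
  have [f1 nz] := imply_to_and _ _ not_zero.
  by exists phi => //; apply/eqP.
have [psi [psi_int psi_fix] psi_reg] := fixed_regular_on separating (fun b bR => bR).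
exists (simple_roots Rs psi); split; first exact: (simple_roots_base hR hred psi_int psi_reg).
exact: (simple_roots_stable hS psi_fix).
Qed.
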